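(* Let $\mathcal{C}=\{\mathcal{N}_1,\dots,\mathcal{N}_k\}$ be a clustering of a finite set of elements into $k$ (possibly overlapping) clusters, every element belonging to at least one cluster. If $\mathcal{N}_i\setminus\bigcup_{j\neq i}\mathcal{N}_j\neq\emptyset$ for all $i\in[k]$, then $\mathcal{C}$ is the only valid clustering (up to relabeling) that is consistent with the entire query matrix.
   Context: The query matrix has $(i,j)$ entry $1$ if elements $i,j$ belong to a common cluster and $0$ otherwise. A valid clustering consistent with the query matrix is a clustering into $k$ clusters whose query matrix coincides with the given one. *)

From mathcomp Require Import all_boot all_fingroup.
Set Implicit Arguments. Unset Strict Implicit. Unset Printing Implicit Defensive.

Definition covers (T : finType) (k : nat) (N : 'I_k -> {set T}) : Prop :=
  forall x : T, exists i : 'I_k, x \in N i.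

Definition query_matrix (T : finType) (k : nat) (N : 'I_k -> {set T}) (x y : T) : bool :=
  [exists i : 'I_k, (x \in N i) && (y \in N i)].

Definition private_part (T : finType) (k : nat) (N : 'I_k -> {set T}) (i : 'I_k) : {set T} :=
  N i :\: \bigcup_(j | j != i) N j.

From mathcomp Require Import all_boot all_fingroup.

Set Implicit Arguments.
Unset Strict Implicit.
Unset Printing Implicit Defensive.

(* Pick in every cluster [N i] a private element [w i]. Its row of the query
   matrix is exactly [N i], so any cluster of [M] containing [w i] is included
   in [N i], and no cluster of [M] contains two distinct private elements.
   Sending [i] to a cluster of [M] containing [w i] is therefore injective,
   hence a permutation of ['I_k]; and every [y \in N i] shares a cluster of [M]
   with [w i], which can only be the one chosen for [i]. Only [M] needs to
   cover [T]. *)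

Section PrivatePart.

Variables (T : finType) (k : nat) (N : 'I_k -> {set T}).

Lemma private_partP x i :
  reflect (x \in N i /\ forall j, j != i -> x \notin N j) (x \in private_part N i).
Proof.
rewrite in_setD andbC; apply: (iffP andP) => [[xNi xU]|[xNi xNj]].
  split=> // j ji; apply: contra xU => xNj; apply/bigcupP; by exists j.
split=> //; apply/bigcupP=> -[j ji]; exact/negP/xNj.
Qed.

Lemma query_matrix_private x i y :
  x \in private_part N i -> query_matrix N x y = (y \in N i).
Proof.
move=> /private_partP[xNi xNj]; apply/existsP/idP => [[j /andP[xj yj]]|yNi].
  by case: (eqVneq j i) => [<- // | ji]; rewrite (negPf (xNj j ji)) in xj.
by exists i; rewrite xNi yNi.
Qed.

End PrivatePart.

Section SameQueryMatrix.

Variables (T : finType) (k : nat) (N M : 'I_k -> {set T}).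
Hypothesis eq_query : forall x y, query_matrix M x y = query_matrix N x y.

Lemma cluster_sub_private x i j :
  x \in private_part N i -> x \in M j -> M j \subset N i.
Proof.
move=> xPi xMj; apply/subsetP => y yMj.
by rewrite -(query_matrix_private y xPi) -eq_query; apply/existsP; exists j; rewrite xMj.
Qed.

Lemma private_parts_separated x x' i i' j :
  x \in private_part N i -> x' \in private_part N i' ->
  x \in M j -> x' \in M j -> i = i'.
Proof.
move=> xPi /private_partP[_ x'N] xMj x'Mj.
have x'Ni : x' \in N i by apply: subsetP x'Mj; exact: cluster_sub_private xPi xMj.
by case: (eqVneq i i') => // ii'; rewrite (negPf (x'N i ii')) in x'Ni.
Qed.

Variables (w : 'I_k -> T) (f : 'I_k -> 'I_k).
Hypothesis w_private : forall i, w i \in private_part N i.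
Hypothesis w_cluster : forall i, w i \in M (f i).

Lemma cluster_of_private_inj : injective f.
Proof.
move=> i i' fii'; apply: (private_parts_separated (w_private i) (w_private i')).
  exact: w_cluster.
by rewrite fii'.
Qed.

Lemma cluster_of_private_eq i : M (f i) = N i.
Proof.
apply/eqP; rewrite eqEsubset (cluster_sub_private (w_private i) (w_cluster i)) /=.
apply/subsetP => y yNi.
have : query_matrix M (w i) y by rewrite eq_query (query_matrix_private _ (w_private i)).
case/existsP => j /andP[wMj yMj].
have fj : f (invF cluster_of_private_inj j) = j := f_invF cluster_of_private_inj j.
rewrite -fj in wMj yMj.
by rewrite -(private_parts_separated (w_private _) (w_private i) (w_cluster _) wMj).
Qed.

End SameQueryMatrix.

Theorem theorem11 (T : finType) (k : nat) (N : 'I_k -> {set T}) :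
  covers N ->
  (forall i : 'I_k, private_part N i != set0) ->
  forall M : 'I_k -> {set T},
    covers M ->
    (forall x y : T, query_matrix M x y = query_matrix N x y) ->
    exists sigma : {perm 'I_k}, forall i : 'I_k, M (sigma i) = N i.
Proof.
move=> _ private_nonempty M M_covers eq_query.
pose w i := xchoose (set0Pn _ (private_nonempty i)).
have w_private i : w i \in private_part N i := xchooseP (set0Pn _ _).
pose f i := xchoose (M_covers (w i)).
have w_cluster i : w i \in M (f i) := xchooseP (M_covers (w i)).
exists (perm (cluster_of_private_inj eq_query w_private w_cluster)) => i.
by rewrite permE (cluster_of_private_eq eq_query w_private).
Qed.
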